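(* The axiom system $\mathbf{AX}^{up}$ is sound and complete for upper probability structures: for every likelihood formula $f$, $f$ is provable in $\mathbf{AX}^{up}$ if and only if $M\models f$ for every upper probability structure $M$.
   Context: Fix a set $\Phi_0$ of primitive propositions; propositional formulas are built from $\Phi_0$ with $\wedge,\neg$ (plus the constant $\mathit{true}$, with $\mathit{false}=\neg\mathit{true}$). A term is $\theta_1 l(\phi_1)+\cdots+\theta_k l(\phi_k)$ with $k\ge1$, reals $\theta_i$ and propositional formulas $\phi_i$; a basic likelihood formula is $t\ge\alpha$ for a term $t$ and real $\alpha$; likelihood formulas are Boolean combinations (via $\neg,\wedge$) of basic likelihood formulas, with abbreviations $l(\phi)-l(\psi)\ge a$ for $l(\phi)+(-1)l(\psi)\ge a$, $t\le a$ for $-t\ge-a$, $t=a$ for $t\ge a\wedge t\le a$. An upper probability structure is $M=(\Omega,\Sigma,\mathcal{P},\pi)$ with $\Sigma$ an algebra on $\Omega$, $\mathcal{P}$ a set of finitely additive probability measures on $\Sigma$, and $\pi$ assigning to each $s\in\Omega$ a truth assignment to $\Phi_0$, such that $[\![p]\!]_M=\{s:\pi(s)(p)=\mathbf{true}\}\in\Sigma$ for each $p$; $[\![\phi]\!]_M$ is defined for all propositional $\phi$ in the standard way. With $\mathcal{P}^*(X)=\sup\{\mu(X):\mu\in\mathcal{P}\}$: $M\models\theta_1 l(\phi_1)+\cdots+\theta_k l(\phi_k)\ge\alpha$ iff $\sum_i\theta_i\mathcal{P}^*([\![\phi_i]\!]_M)\ge\alpha$; $M\models\neg f$ iff $M\not\models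 f$; $M\models f\wedge g$ iff both. The axiom system $\mathbf{AX}^{up}$ consists of: (Taut) all instances of propositional tautologies obtained by substituting likelihood formulas for propositional variables; (MP) from $f$ and $f\Rightarrow g$ infer $g$; (Ineq) all instances of valid inequality formulas, where an inequality formula is a Boolean combination of linear inequalities $a_1x_1+\cdots+a_nx_n\ge c$ over real variables, valid if true under every real assignment, and an instance replaces each variable $x_i$ (uniformly) by $l(\phi_i)$ for a propositional formula $\phi_i$; (L1) $l(\mathit{false})=0$; (L2) $l(\mathit{true})=1$; (L3) $l(\phi)\ge0$; (L4) $l(\phi_1)+\cdots+l(\phi_m)-n\,l(\phi)\ge k$ whenever $\phi\Rightarrow\bigvee_{J\subseteq\{1,\dots,m\},|J|=k+n}\bigwedge_{j\in J}\phi_j$ and $\bigvee_{J\subseteq\{1,\dots,m\},|J|=k}\bigwedge_{j\in J}\phi_j$ are propositional tautologies (for natural numbers $m,n,k$ and propositional $\phi,\phi_1,\dots,\phi_m$); (L5) $l(\phi)=l(\psi)$ whenever $\phi\Leftrightarrow\psi$ is a propositional tautology. *)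

From Stdlib Require Import Reals List.
From Coquelicot Require Import Coquelicot.
Import ListNotations.
Open Scope R_scope.

Set Implicit Arguments.

Section Syntax.
Variable Phi0 : Type.

Inductive pform : Type :=
| PVar : Phi0 -> pform
| PTrue : pform
| PNot : pform -> pform
| PAnd : pform -> pform -> pform.

Definition PFalse : pform := PNot PTrue.
Definition POr (a b : pform) : pform := PNot (PAnd (PNot a) (PNot b)).
Definition PImp (a b : pform) : pform := PNot (PAnd a (PNot b)).
Definition PIff (a b : pform) : pform := PAnd (PImp a b) (PImp b a).

Fixpoint peval (v : Phi0 -> bool) (f : pform) : bool :=
  match f with
  | PVar p => v p
  | PTrue => true
  | PNot g => negb (peval v g)
  | PAnd g h => andb (peval v g) (peval v h)
  end.

Definition ptaut (f : pform) : Prop := forall v : Phi0 -> bool, peval v f = true.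

Definition big_or (l : list pform) : pform := fold_right POr PFalse l.
Definition big_and (l : list pform) : pform := fold_right PAnd PTrue l.

(* all sub-lists of l of length r, i.e. the families (phi_j)_{j in J} for
   J a subset of the index set of l with |J| = r *)
Fixpoint choose {A : Type} (r : nat) (l : list A) : list (list A) :=
  match r, l with
  | O, _ => [ [] ]
  | S r', [] => []
  | S r', x :: l' => map (cons x) (choose r' l') ++ choose r l'
  end.

Definition at_least (r : nat) (phis : list pform) : pform :=
  big_or (map big_and (choose r phis)).

(* a term theta_1 l(phi_1) + ... + theta_k l(phi_k), k >= 1:
   a first summand followed by a (possibly empty) list of further summands *)
Definition term : Type := ((R * pform) * list (R * pform))%type.

Definition term_list (t : term) : list (R * pform) := fst t :: snd t.

Inductive lform : Type :=
| LGe : term -> R -> lform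
| LNot : lform -> lform
| LAnd : lform -> lform -> lform.

Definition LImp (f g : lform) : lform := LNot (LAnd f (LNot g)).

Definition term_opp (t : term) : term :=
  ((- fst (fst t), snd (fst t)), map (fun p => (- fst p, snd p)) (snd t)).
Definition LLe (t : term) (a : R) : lform := LGe (term_opp t) (- a).
Definition LEq (t : term) (a : R) : lform := LAnd (LGe t a) (LLe t a).
Definition l1 (phi : pform) : term := ((1, phi), []).
Definition ldiff (phi psi : pform) : term := ((1, phi), [(-1, psi)]).

Inductive sform : Type :=
| SVar : nat -> sform
| SNot : sform -> sform
| SAnd : sform -> sform -> sform.

Fixpoint seval (v : nat -> bool) (s : sform) : bool :=
  match s with
  | SVar n => v n
  | SNot s' => negb (seval v s')
  | SAnd a b => andb (seval v a) (seval v b)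
  end.

Definition staut (s : sform) : Prop := forall v : nat -> bool, seval v s = true.

Fixpoint ssubst (sigma : nat -> lform) (s : sform) : lform :=
  match s with
  | SVar n => sigma n
  | SNot s' => LNot (ssubst sigma s')
  | SAnd a b => LAnd (ssubst sigma a) (ssubst sigma b)
  end.

(* a_1 x_{i_1} + ... + a_n x_{i_n} >= c, n >= 1, variables indexed by nat *)
Inductive iform : Type :=
| IGe : (R * nat) -> list (R * nat) -> R -> iform
| INot : iform -> iform
| IAnd : iform -> iform -> iform.

Definition lin_sum (x : nat -> R) (l : list (R * nat)) : R :=
  fold_right (fun p acc => fst p * x (snd p) + acc) 0 l.

Fixpoint ieval (x : nat -> R) (e : iform) : Prop :=
  match e with
  | IGe h tl c => lin_sum x (h :: tl) >= c
  | INot e' => ~ ieval x e'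
  | IAnd a b => ieval x a /\ ieval x b
  end.

Definition ivalid (e : iform) : Prop := forall x : nat -> R, ieval x e.

Fixpoint iinst (sigma : nat -> pform) (e : iform) : lform :=
  match e with
  | IGe h tl c =>
      LGe ((fst h, sigma (snd h)), map (fun p => (fst p, sigma (snd p))) tl) c
  | INot e' => LNot (iinst sigma e')
  | IAnd a b => LAnd (iinst sigma a) (iinst sigma b)
  end.

Definition L4_term (phis : list pform) (n : nat) (phi : pform) : term :=
  match map (fun q => (1, q)) phis with
  | [] => ((- INR n, phi), [])
  | h :: tl => (h, tl ++ [(- INR n, phi)])
  end.

Inductive provable : lform -> Prop :=
| Ax_Taut : forall (s : sform) (sigma : nat -> lform),
    staut s -> provable (ssubst sigma s)
| Ax_Ineq : forall (e : iform) (sigma : nat -> pform),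
    ivalid e -> provable (iinst sigma e)
| Ax_L1 : provable (LEq (l1 PFalse) 0)
| Ax_L2 : provable (LEq (l1 PTrue) 1)
| Ax_L3 : forall phi : pform, provable (LGe (l1 phi) 0)
| Ax_L4 : forall (m n k : nat) (phi : pform) (phis : list pform),
    length phis = m ->
    ptaut (PImp phi (at_least (k + n) phis)) ->
    ptaut (at_least k phis) ->
    provable (LGe (L4_term phis n phi) (INR k))
| Ax_L5 : forall phi psi : pform,
    ptaut (PIff phi psi) -> provable (LEq (ldiff phi psi) 0)
| Rule_MP : forall f g : lform,
    provable f -> provable (LImp f g) -> provable g.

End Syntax.

Definition is_algebra (Omega : Type) (Sigma : (Omega -> Prop) -> Prop) : Prop :=
  Sigma (fun _ => True) /\
  (forall X, Sigma X -> Sigma (fun s => ~ X s)) /\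
  (forall X Y, Sigma X -> Sigma Y -> Sigma (fun s => X s \/ Y s)).

(* mu is a finitely additive probability measure on Sigma
   (only its values on Sigma matter) *)
Definition is_fa_prob (Omega : Type) (Sigma : (Omega -> Prop) -> Prop)
    (mu : (Omega -> Prop) -> R) : Prop :=
  (forall X, Sigma X -> 0 <= mu X) /\
  mu (fun _ => True) = 1 /\
  (forall X Y, Sigma X -> Sigma Y -> (forall s, X s -> Y s -> False) ->
     mu (fun s => X s \/ Y s) = mu X + mu Y).

Record UPS (Phi0 : Type) : Type := {
  ups_Omega : Type;
  ups_Sigma : (ups_Omega -> Prop) -> Prop;
  ups_Sigma_alg : is_algebra ups_Sigma;
  ups_P : ((ups_Omega -> Prop) -> R) -> Prop;
  ups_P_prob : forall mu, ups_P mu -> is_fa_prob ups_Sigma mu;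
  ups_P_nonempty : exists mu, ups_P mu;
  ups_pi : ups_Omega -> Phi0 -> bool;
  ups_pi_meas : forall p : Phi0, ups_Sigma (fun s => ups_pi s p = true)
}.

Section Semantics.
Variables (Phi0 : Type) (M : UPS Phi0).

Definition ext (phi : pform Phi0) : ups_Omega M -> Prop :=
  fun s => peval (ups_pi M s) phi = true.

Definition upper (X : ups_Omega M -> Prop) : R :=
  real (Lub_Rbar (fun r => exists mu, ups_P M mu /\ r = mu X)).

Definition term_val (t : term Phi0) : R :=
  fold_right (fun p acc => fst p * upper (ext (snd p)) + acc) 0 (term_list t).

Fixpoint sat (f : lform Phi0) : Prop :=
  match f with
  | LGe t a => term_val t >= a
  | LNot g => ~ sat g
  | LAnd g h => sat g /\ sat h
  end.

End Semantics.

(* For L4 the two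
   tautologies say that, pointwise, the number of true [phi_j] is at least [k + n [phi]];
   integrating this against each [mu] in [P] and passing to the supremum gives the axiom.

   Completeness: let [phi_1, ..., phi_r] be the propositional formulas occurring in [f] and
   [phi_0 = true], and read the variable [x_j] as [l(phi_j)].  We show that [x_0 = 1] together
   with finitely many instances of L4 over the [phi_j] imply [f] as an inequality formula, so
   that [f] follows by Ineq, L2, L4 and MP.  Given [x] satisfying these hypotheses and an index
   [i], consider the linear system in the weights [m] of the atoms of the Boolean algebra
   generated by the [phi_j]: [m >= 0], [sum m = 1], [m(phi_j) <= x_j] for all [j], and
   [m(phi_i) >= x_i].  Fourier-Motzkin elimination of all the weights leaves nonnegative
   integer combinations of the constraints whose coefficient vanishes on every atom, and such a
   combination is exactly an instance of L4; so the system is solvable.  The set of all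
   probabilities dominated by [x] is then an upper probability structure in which
   [P^*(phi_j) = x_j] for every [j], and it satisfies [f] by validity. *)

From Stdlib Require Import Reals List Lra Lia ZArith FinFun.
From Stdlib Require Import Classical ClassicalEpsilon FunctionalExtensionality PropExtensionality.
From Coquelicot Require Import Coquelicot.
Import ListNotations.
Open Scope R_scope.

Set Implicit Arguments.

Section Counting.
Variables (Phi0 : Type) (v : Phi0 -> bool).

Fixpoint count_true (l : list (pform Phi0)) : nat :=
  match l with
  | [] => O
  | q :: l' => ((if peval v q then 1 else 0) + count_true l')%nat
  end.

Lemma count_true_app l1 l2 : count_true (l1 ++ l2) = (count_true l1 + count_true l2)%nat.
Proof. induction l1; simpl; lia. Qed.

Lemma count_true_repeat q c : count_true (repeat q c) = if peval v q then c else 0%nat.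
Proof. induction c; simpl; destruct (peval v q); simpl in *; lia. Qed.

Lemma peval_big_or_app l1 l2 :
  peval v (big_or (l1 ++ l2)) = orb (peval v (big_or l1)) (peval v (big_or l2)).
Proof.
  induction l1 as [|a l1 IH]; simpl; [reflexivity|].
  rewrite IH. destruct (peval v a), (peval v (big_or l1)), (peval v (big_or l2)); reflexivity.
Qed.

Lemma peval_big_or_map_cons x (C : list (list (pform Phi0))) :
  peval v (big_or (map (@big_and _) (map (cons x) C)))
  = andb (peval v x) (peval v (big_or (map (@big_and _) C))).
Proof.
  induction C as [|c C IH]; simpl.
  - destruct (peval v x); reflexivity.
  - rewrite IH.
    destruct (peval v x), (peval v (big_and c)), (peval v (big_or (map (@big_and _) C)));
      reflexivity.
Qed.

Lemma peval_at_least l r : peval v (at_least r l) = true <-> (r <= count_true l)%nat.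
Proof.
  unfold at_least. revert r; induction l as [|x l IH]; intros [|r]; simpl choose.
  - simpl. split; [lia|reflexivity].
  - simpl. split; [discriminate|lia].
  - simpl. split; [lia|reflexivity].
  - rewrite map_app, peval_big_or_app, peval_big_or_map_cons; simpl count_true.
    specialize (IH r) as IHr. specialize (IH (S r)).
    destruct (peval v x); simpl.
    + destruct (peval v (big_or (map (@big_and _) (choose r l)))); simpl.
      * split; intros _; [|reflexivity]. assert (r <= count_true l)%nat by now apply IHr. lia.
      * assert (~ (r <= count_true l)%nat) by (rewrite <- IHr; discriminate).
        rewrite IH. lia.
    + rewrite IH. lia.
Qed.

End Counting.

Lemma pred_ext {T : Type} (X Y : T -> Prop) : (forall s, X s <-> Y s) -> X = Y.
Proof.
  intros H. apply functional_extensionality. intros s. apply propositional_extensionality, H.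
Qed.

Section FinitelyAdditive.
Variables (T : Type) (Sg : (T -> Prop) -> Prop) (mu : (T -> Prop) -> R).
Hypotheses (Sg_alg : is_algebra Sg) (mu_prob : is_fa_prob Sg mu).

Lemma algebra_true : Sg (fun _ => True).
Proof. apply Sg_alg. Qed.

Lemma algebra_not X : Sg X -> Sg (fun s => ~ X s).
Proof. apply Sg_alg. Qed.

Lemma algebra_and X Y : Sg X -> Sg Y -> Sg (fun s => X s /\ Y s).
Proof.
  intros HX HY.
  replace (fun s => X s /\ Y s) with (fun s => ~ ((fun s => ~ X s) s \/ (fun s => ~ Y s) s))
    by (apply pred_ext; intros s; tauto).
  apply algebra_not, Sg_alg; apply algebra_not; assumption.
Qed.

Lemma prob_ge0 X : Sg X -> 0 <= mu X.
Proof. apply mu_prob. Qed.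

Lemma prob_empty X : Sg X -> (forall s, ~ X s) -> mu X = 0.
Proof.
  intros HX Hn. destruct mu_prob as [_ [_ Hadd]].
  pose proof (Hadd X X HX HX (fun s a _ => Hn s a)) as H.
  replace (fun s => X s \/ X s) with X in H by (apply pred_ext; tauto). lra.
Qed.

Lemma prob_split X A : Sg X -> Sg A ->
  mu X = mu (fun s => X s /\ A s) + mu (fun s => X s /\ ~ A s).
Proof.
  intros HX HA. destruct mu_prob as [_ [_ Hadd]].
  rewrite <- Hadd by (try apply algebra_and; try apply algebra_not; auto; simpl; tauto).
  f_equal. apply pred_ext. intros s. tauto.
Qed.

Lemma prob_le1 X : Sg X -> mu X <= 1.
Proof.
  intros HX. destruct mu_prob as [_ [Htrue _]].
  pose proof (prob_split algebra_true HX) as E; cbv beta in E.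
  replace (fun s => True /\ X s) with X in E by (apply pred_ext; tauto).
  assert (0 <= mu (fun s => True /\ ~ X s))
    by (apply prob_ge0, algebra_and; [apply algebra_true|apply algebra_not; auto]).
  lra.
Qed.

(* A list of weighted events is a simple function; [weight_at] is its value at a point and
   [weighted_prob L Z] its integral over [Z]. *)
Definition weight_at (L : list (R * (T -> Prop))) (s : T) : R :=
  fold_right (fun p acc => (if excluded_middle_informative (snd p s) then fst p else 0) + acc) 0 L.

Lemma weight_at_app L1 L2 s : weight_at (L1 ++ L2) s = weight_at L1 s + weight_at L2 s.
Proof.
  induction L1 as [|p L1 IH]; simpl; [lra|]. unfold weight_at in *. simpl. rewrite IH. lra.
Qed.

Definition weighted_prob (L : list (R * (T -> Prop))) (Z : T -> Prop) : R :=
  fold_right (fun p acc => fst p * mu (fun s => Z s /\ snd p s) + acc) 0 L.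

Lemma weighted_prob_split L Z A : List.Forall (fun p => Sg (snd p)) L -> Sg Z -> Sg A ->
  weighted_prob L Z
  = weighted_prob L (fun s => Z s /\ A s) + weighted_prob L (fun s => Z s /\ ~ A s).
Proof.
  intros HL HZ HA. induction HL as [|[w X] L HX HL IH]; simpl in *; [lra|].
  rewrite IH, (prob_split (algebra_and HZ HX) HA).
  replace (fun s => (Z s /\ X s) /\ A s) with (fun s => (Z s /\ A s) /\ X s)
    by (apply pred_ext; tauto).
  replace (fun s => (Z s /\ X s) /\ ~ A s) with (fun s => (Z s /\ ~ A s) /\ X s)
    by (apply pred_ext; tauto).
  lra.
Qed.

Lemma simple_integral_nonneg L : List.Forall (fun p => Sg (snd p)) L ->
  forall Z c, Sg Z -> (forall s, Z s -> 0 <= c + weight_at L s) ->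
  0 <= c * mu Z + weighted_prob L Z.
Proof.
  intros HL. induction HL as [|[w X] L HX HL IH]; intros Z c HZ Hc; simpl in *.
  - destruct (classic (exists s, Z s)) as [[s Hs]|Hn].
    + specialize (Hc s Hs). pose proof (prob_ge0 HZ). nra.
    + rewrite (prob_empty HZ) by (intros s Hs; eauto). lra.
  - set (ZX := fun s => Z s /\ X s). set (ZnX := fun s => Z s /\ ~ X s).
    assert (HZX : Sg ZX) by (apply algebra_and; auto).
    assert (HZnX : Sg ZnX) by (apply algebra_and, algebra_not; auto).
    assert (I1 : 0 <= (c + w) * mu ZX + weighted_prob L ZX).
    { apply IH; auto. intros s [Hs Hx]. specialize (Hc s Hs).
      destruct (excluded_middle_informative (X s)); [lra|contradiction]. }
    assert (I2 : 0 <= c * mu ZnX + weighted_prob L ZnX).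
    { apply IH; auto. intros s [Hs Hx]. specialize (Hc s Hs).
      destruct (excluded_middle_informative (X s)); [contradiction|lra]. }
    rewrite (prob_split HZ HX), (weighted_prob_split HL HZ HX). fold ZX ZnX. lra.
Qed.

Lemma simple_expectation_nonneg L c : List.Forall (fun p => Sg (snd p)) L ->
  (forall s, 0 <= c + weight_at L s) ->
  0 <= c + fold_right (fun p acc => fst p * mu (snd p) + acc) 0 L.
Proof.
  intros HL Hc.
  pose proof (simple_integral_nonneg HL algebra_true (fun s _ => Hc s)) as H.
  destruct mu_prob as [_ [Htrue _]]. rewrite Htrue in H. unfold weighted_prob in H.
  replace (fold_right _ 0 L) with (fold_right (fun p acc => fst p * mu (snd p) + acc) 0 L) in H;
    [lra|].
  clear. induction L as [|p L IH]; simpl; [reflexivity|].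
  rewrite IH. do 3 f_equal. apply pred_ext. tauto.
Qed.

End FinitelyAdditive.

Section Soundness.
Variables (Phi0 : Type) (M : UPS Phi0).

Lemma ext_measurable phi : ups_Sigma M (ext M phi).
Proof.
  pose proof (ups_Sigma_alg M) as Ha.
  induction phi as [p| |g IH|g IHg h IHh]; unfold ext; simpl.
  - apply ups_pi_meas.
  - replace (fun _ => true = true) with (fun _ : ups_Omega M => True)
      by (apply pred_ext; intuition). apply algebra_true; auto.
  - replace (fun s => negb (peval (ups_pi M s) g) = true) with (fun s => ~ ext M g s).
    + apply algebra_not; auto.
    + apply pred_ext. intros s. unfold ext.
      destruct (peval (ups_pi M s) g); simpl; intuition discriminate.
  - replace (fun s => andb (peval (ups_pi M s) g) (peval (ups_pi M s) h) = true)
      with (fun s => ext M g s /\ ext M h s).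
    + apply algebra_and; auto.
    + apply pred_ext. intros s. unfold ext.
      destruct (peval (ups_pi M s) g), (peval (ups_pi M s) h); simpl; intuition discriminate.
Qed.

Lemma upper_spec {X} : ups_Sigma M X ->
  (forall mu, ups_P M mu -> mu X <= upper M X) /\
  (forall b, (forall mu, ups_P M mu -> mu X <= b) -> upper M X <= b).
Proof.
  intros HX. destruct (ups_P_nonempty M) as [mu0 Hmu0].
  set (E := fun r => exists mu, ups_P M mu /\ r = mu X).
  assert (bounded : forall r, E r -> r <= 1).
  { intros r [mu [Hm ->]]. eapply prob_le1; eauto using ups_Sigma_alg, ups_P_prob. }
  unfold upper. fold E. destruct (Lub_Rbar_correct E) as [Hub Hlub].
  destruct (Lub_Rbar E) as [l| |] eqn:EL; simpl in *.
  - split.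
    + intros mu Hm. apply (Hub (mu X)). exists mu; auto.
    + intros b Hb. apply (Hlub (Finite b)). intros r [mu [Hm ->]]. apply Hb; auto.
  - exfalso. apply (Hlub (Finite 1)). intros r Hr. apply bounded; auto.
  - exfalso. apply (Hub (mu0 X)). exists mu0; auto.
Qed.

Lemma upper_const {X} c : ups_Sigma M X -> (forall mu, ups_P M mu -> mu X = c) -> upper M X = c.
Proof.
  intros HX Hc. destruct (upper_spec HX) as [Hub Hlub]. destruct (ups_P_nonempty M) as [mu0 H0].
  apply Rle_antisym.
  - apply Hlub. intros mu Hm. rewrite Hc; auto. lra.
  - rewrite <- (Hc mu0 H0). auto.
Qed.

Definition lik (phi : pform Phi0) : R := upper M (ext M phi).

Definition lin_val (l : list (R * pform Phi0)) : R :=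
  fold_right (fun p acc => fst p * lik (snd p) + acc) 0 l.

Lemma term_val_cons a phi l : term_val M ((a, phi), l) = a * lik phi + lin_val l.
Proof. reflexivity. Qed.

Lemma lin_val_app l1 l2 : lin_val (l1 ++ l2) = lin_val l1 + lin_val l2.
Proof. induction l1 as [|p l1 IH]; simpl; [lra|]. rewrite IH. lra. Qed.

Lemma lik_false : lik (PFalse Phi0) = 0.
Proof.
  apply upper_const; [apply ext_measurable|]. intros mu Hm.
  apply (prob_empty (ups_P_prob M mu Hm)); [apply ext_measurable|].
  intros s. unfold ext. simpl. discriminate.
Qed.

Lemma lik_true : lik (PTrue Phi0) = 1.
Proof.
  apply upper_const; [apply ext_measurable|]. intros mu Hm.
  replace (ext M (PTrue Phi0)) with (fun _ : ups_Omega M => True)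
    by (apply pred_ext; unfold ext; simpl; tauto).
  apply (ups_P_prob M mu Hm).
Qed.

Lemma lik_ge0 phi : 0 <= lik phi.
Proof.
  destruct (upper_spec (ext_measurable phi)) as [Hub _]. destruct (ups_P_nonempty M) as [mu0 H0].
  eapply Rle_trans; [|apply (Hub mu0 H0)].
  apply (prob_ge0 (ups_P_prob M mu0 H0)), ext_measurable.
Qed.

Lemma sat_ssubst sigma s :
  sat M (ssubst sigma s)
  <-> seval (fun n => if excluded_middle_informative (sat M (sigma n)) then true else false) s
      = true.
Proof.
  induction s as [n|s IH|a IHa b IHb]; simpl.
  - destruct (excluded_middle_informative (sat M (sigma n))); intuition discriminate.
  - rewrite IH. destruct (seval _ s); simpl; intuition discriminate.
  - rewrite IHa, IHb. destruct (seval _ a), (seval _ b); simpl; intuition discriminate.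
Qed.

Lemma sat_iinst sigma e : sat M (iinst sigma e) <-> ieval (fun n => lik (sigma n)) e.
Proof.
  assert (Hl : forall tl, lin_val (map (fun p => (fst p, sigma (snd p))) tl)
                          = lin_sum (fun n => lik (sigma n)) tl).
  { induction tl as [|p tl IH]; simpl; [reflexivity|]. rewrite IH. reflexivity. }
  induction e as [h tl c|e IH|a IHa b IHb]; cbn [iinst sat ieval].
  - rewrite term_val_cons, Hl. reflexivity.
  - rewrite IH. reflexivity.
  - rewrite IHa, IHb. reflexivity.
Qed.

Lemma term_val_L4 phis n phi :
  term_val M (L4_term phis n phi) = lin_val (map (fun q => (1, q)) phis) - INR n * lik phi.
Proof.
  unfold L4_term. destruct (map (fun q => (1, q)) phis) as [|[a q] tl].
  - rewrite term_val_cons. simpl. lra.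
  - rewrite term_val_cons, lin_val_app. simpl. lra.
Qed.

Definition lin_prob (mu : (ups_Omega M -> Prop) -> R) (l : list (R * pform Phi0)) : R :=
  fold_right (fun p acc => fst p * mu (ext M (snd p)) + acc) 0 l.

Lemma lin_prob_app mu l1 l2 : lin_prob mu (l1 ++ l2) = lin_prob mu l1 + lin_prob mu l2.
Proof. induction l1 as [|p l1 IH]; simpl; [lra|]. rewrite IH. lra. Qed.

Lemma lin_prob_le_lin_val mu l : ups_P M mu -> (forall p, In p l -> 0 <= fst p) ->
  lin_prob mu l <= lin_val l.
Proof.
  intros Hm. induction l as [|[a q] l IH]; intros Hl; simpl; [lra|].
  pose proof (proj1 (upper_spec (ext_measurable q)) mu Hm).
  assert (0 <= a) by (apply (Hl (a, q)); simpl; auto).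
  assert (lin_prob mu l <= lin_val l) by (apply IH; intros p Hp; apply Hl; simpl; auto).
  unfold lik. nra.
Qed.

Lemma weight_at_count s phis :
  weight_at (map (fun q => (1, ext M q)) phis) s = INR (count_true (ups_pi M s) phis).
Proof.
  induction phis as [|q phis IH]; simpl; [reflexivity|]. rewrite IH, plus_INR. unfold ext.
  destruct (excluded_middle_informative _) as [E|E]; simpl;
    destruct (peval (ups_pi M s) q); simpl; try lra; exfalso; auto.
Qed.

Lemma prob_L4 mu (n k : nat) phi phis : ups_P M mu ->
  ptaut (PImp phi (at_least (k + n) phis)) -> ptaut (at_least k phis) ->
  INR k + INR n * mu (ext M phi) <= lin_prob mu (map (fun q => (1, q)) phis).
Proof.
  intros HP Himp Hk.
  set (l := map (fun q => (1, q)) phis ++ [(- INR n, phi)]).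
  set (L := map (fun p => (fst p, ext M (snd p))) l).
  assert (HL : List.Forall (fun p => ups_Sigma M (snd p)) L).
  { apply Forall_forall. intros p Hp. apply in_map_iff in Hp as [q [<- _]]. apply ext_measurable. }
  assert (Hw : forall s, 0 <= - INR k + weight_at L s).
  { intros s. unfold L, l. rewrite map_app, weight_at_app, map_map, weight_at_count.
    unfold weight_at. simpl.
    specialize (Himp (ups_pi M s)). specialize (Hk (ups_pi M s)). simpl in Himp.
    apply peval_at_least, le_INR in Hk. unfold ext.
    destruct (excluded_middle_informative _) as [E|E].
    - rewrite E in Himp. simpl in Himp.
      destruct (peval _ (at_least (k + n) phis)) eqn:Hkn; [|discriminate].
      apply peval_at_least, le_INR in Hkn. rewrite plus_INR in Hkn. lra.
    - lra. }
  pose proof (simple_expectation_nonneg (ups_Sigma_alg M) (ups_P_prob M mu HP) HL Hw) as H.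
  replace (fold_right _ 0 L) with (lin_prob mu l) in H
    by (unfold L; clear; induction l; simpl; congruence).
  unfold l in H. rewrite lin_prob_app in H. simpl in H. lra.
Qed.

Lemma sat_L4 (n k : nat) phi phis :
  ptaut (PImp phi (at_least (k + n) phis)) -> ptaut (at_least k phis) ->
  sat M (LGe (L4_term phis n phi) (INR k)).
Proof.
  intros Himp Hk. cbn [sat]. rewrite term_val_L4.
  set (sum_lik := lin_val (map (fun q => (1, q)) phis)).
  assert (Hmu : forall mu, ups_P M mu -> INR k + INR n * mu (ext M phi) <= sum_lik).
  { intros mu Hm. eapply Rle_trans; [apply prob_L4; eauto|].
    apply lin_prob_le_lin_val; auto.
    intros p Hp. apply in_map_iff in Hp as [q [<- _]]. simpl; lra. }
  destruct n as [|n].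
  - destruct (ups_P_nonempty M) as [mu0 H0]. specialize (Hmu mu0 H0). simpl in *. lra.
  - assert (Hn : 0 < INR (S n)) by (apply lt_0_INR; lia).
    assert (lik phi <= (sum_lik - INR k) / INR (S n)).
    { apply (upper_spec (ext_measurable phi)). intros mu Hm. specialize (Hmu mu Hm).
      apply Rmult_le_reg_r with (INR (S n)); [lra|]. field_simplify; lra. }
    apply Rmult_le_compat_r with (r := INR (S n)) in H; [|lra].
    field_simplify in H; lra.
Qed.

Lemma soundness f : provable f -> sat M f.
Proof.
  induction 1 as [s sigma Hs|e sigma He| | |phi|m n k phi phis _ Himp Hk|phi psi H
                 |f g _ IHf _ IHg].
  - apply sat_ssubst, Hs.
  - apply sat_iinst, He.
  - pose proof lik_false. cbn. unfold lik in *. lra.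
  - pose proof lik_true. cbn. unfold lik in *. lra.
  - pose proof (lik_ge0 phi). cbn. unfold lik in *. lra.
  - apply sat_L4; auto.
  - assert (E : ext M phi = ext M psi).
    { apply pred_ext. intros s. specialize (H (ups_pi M s)). unfold ext. simpl in H.
      destruct (peval (ups_pi M s) phi), (peval (ups_pi M s) psi); simpl in H;
        intuition discriminate. }
    cbn. unfold lik. rewrite E. lra.
  - cbn in IHg. tauto.
Qed.

End Soundness.

Lemma separating_point (Ls Us : list R) : (forall l u, In l Ls -> In u Us -> l <= u) ->
  exists d, (forall l, In l Ls -> l <= d) /\ (forall u, In u Us -> d <= u).
Proof.
  induction Ls as [|l0 Ls IH]; intros H.
  - assert (exists d, forall u, In u Us -> d <= u) as [d Hd].
    { clear H. induction Us as [|u0 Us [d Hd]]; [exists 0; intros u []|].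
      exists (Rmin d u0). intros u [<-|Hu]; [apply Rmin_r|].
      eapply Rle_trans; [apply Rmin_l|auto]. }
    exists d; split; [intros l []|auto].
  - destruct IH as [d [H1 H2]]; [intros l u Hl Hu; apply H; simpl; auto|].
    exists (Rmax l0 d). split.
    + intros l [<-|Hl]; [apply Rmax_l|]. eapply Rle_trans; [apply H1; auto|apply Rmax_r].
    + intros u Hu. apply Rmax_lub; auto. apply H; simpl; auto.
Qed.

Lemma div_le_add (v c d : R) : 0 < c -> - v / c <= d -> v + c * d >= 0.
Proof.
  intros Hc H. apply (Rmult_le_compat_l c) in H; [|lra].
  replace (c * (- v / c)) with (- v) in H by (field; lra). lra.
Qed.

Lemma le_div_sub (v c d : R) : 0 < c -> d <= v / c -> v - c * d >= 0.
Proof.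
  intros Hc H. apply (Rmult_le_compat_l c) in H; [|lra].
  replace (c * (v / c)) with v in H by (field; lra). lra.
Qed.

Lemma div_le_div_comb (vp cp vq cq : R) : 0 < cp -> 0 < cq ->
  cq * vp + cp * vq >= 0 -> - vp / cp <= vq / cq.
Proof.
  intros Hp Hq H. apply (Rmult_le_reg_r (cp * cq)); [nra|].
  replace (- vp / cp * (cp * cq)) with (- vp * cq) by (field; lra).
  replace (vq / cq * (cp * cq)) with (vq * cp) by (field; lra). lra.
Qed.

(* Fourier-Motzkin elimination for the system [lin k y + g k >= 0] (k : K) in the unknowns
   [y t] (t in [vars]).  A row is a nonnegative integer combination of these inequalities. *)
Section FourierMotzkin.
Variables (T K : Type) (T_eq_dec : forall x y : T, {x = y} + {x <> y}).
Variables (a : K -> T -> Z) (g : K -> R) (vars : list T).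

Definition lin (k : K) (y : T -> R) : R :=
  fold_right (fun t acc => IZR (a k t) * y t + acc) 0 vars.

Definition row_val (rho : list (nat * K)) (y : T -> R) : R :=
  fold_right (fun ck acc => INR (fst ck) * (lin (snd ck) y + g (snd ck)) + acc) 0 rho.

Definition row_coef (rho : list (nat * K)) (t : T) : Z :=
  fold_right (fun ck acc => (Z.of_nat (fst ck) * a (snd ck) t + acc)%Z) 0%Z rho.

Definition row_scale (c : nat) (rho : list (nat * K)) : list (nat * K) :=
  map (fun ck => ((c * fst ck)%nat, snd ck)) rho.

(* for [row_coef p t > 0 > row_coef q t], a combination of [p] and [q] free of [t] *)
Definition row_combine (t : T) (p q : list (nat * K)) : list (nat * K) :=
  row_scale (Z.to_nat (- row_coef q t)) p ++ row_scale (Z.to_nat (row_coef p t)) q.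

Definition fm_step (t : T) (rows : list (list (nat * K))) : list (list (nat * K)) :=
  filter (fun r => Z.eqb (row_coef r t) 0) rows ++
  flat_map (fun p => map (row_combine t p) (filter (fun r => Z.ltb (row_coef r t) 0) rows))
           (filter (fun r => Z.ltb 0 (row_coef r t)) rows).

Fixpoint fm_eliminate (ts : list T) (rows : list (list (nat * K))) : list (list (nat * K)) :=
  match ts with
  | [] => rows
  | t :: ts' => fm_eliminate ts' (fm_step t rows)
  end.

Definition update (y : T -> R) (t : T) (s : R) : T -> R :=
  fun t' => if T_eq_dec t' t then s else y t'.

Lemma lin_zero k : lin k (fun _ => 0) = 0.
Proof. unfold lin. induction vars as [|t l IH]; simpl; [reflexivity|]. rewrite IH. ring. Qed.

Lemma row_val_zero rho :
  row_val rho (fun _ => 0) = fold_right (fun ck acc => INR (fst ck) * g (snd ck) + acc) 0 rho.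
Proof. induction rho as [|ck rho IH]; simpl; [reflexivity|]. rewrite IH, lin_zero. ring. Qed.

Lemma row_val_app r1 r2 y : row_val (r1 ++ r2) y = row_val r1 y + row_val r2 y.
Proof. induction r1 as [|ck r1 IH]; simpl; [ring|]. rewrite IH. ring. Qed.

Lemma row_coef_cons c k rho t :
  row_coef ((c, k) :: rho) t = (Z.of_nat c * a k t + row_coef rho t)%Z.
Proof. reflexivity. Qed.

Lemma row_coef_app r1 r2 t : row_coef (r1 ++ r2) t = (row_coef r1 t + row_coef r2 t)%Z.
Proof. induction r1 as [|ck r1 IH]; simpl; [ring|]. rewrite IH. ring. Qed.

Lemma row_val_scale c r y : row_val (row_scale c r) y = INR c * row_val r y.
Proof. induction r as [|ck r IH]; simpl; [ring|]. rewrite IH, mult_INR. ring. Qed.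

Lemma row_coef_scale c r t : row_coef (row_scale c r) t = (Z.of_nat c * row_coef r t)%Z.
Proof. induction r as [|ck r IH]; simpl; [ring|]. rewrite IH, Nat2Z.inj_mul. ring. Qed.

Section Combine.
Variables (t : T) (p q : list (nat * K)).
Hypotheses (Hp : (0 < row_coef p t)%Z) (Hq : (row_coef q t < 0)%Z).

Lemma row_coef_combine t' :
  row_coef (row_combine t p q) t'
  = (- row_coef q t * row_coef p t' + row_coef p t * row_coef q t')%Z.
Proof. unfold row_combine. rewrite row_coef_app, !row_coef_scale, !Z2Nat.id by lia. ring. Qed.

Lemma row_val_combine y :
  row_val (row_combine t p q) y
  = IZR (- row_coef q t) * row_val p y + IZR (row_coef p t) * row_val q y.
Proof.
  unfold row_combine. rewrite row_val_app, !row_val_scale, !INR_IZR_INZ, !Z2Nat.id by lia. ring.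
Qed.

End Combine.

Lemma in_fm_step t rows r : In r (fm_step t rows) <->
  (In r rows /\ row_coef r t = 0%Z) \/
  exists p q, In p rows /\ In q rows /\ (0 < row_coef p t)%Z /\ (row_coef q t < 0)%Z /\
              r = row_combine t p q.
Proof.
  unfold fm_step. rewrite in_app_iff, filter_In, in_flat_map, Z.eqb_eq. split.
  - intros [H|[p [Hp Hr]]]; [left; exact H|right].
    apply in_map_iff in Hr as [q [<- Hq]]. apply filter_In in Hp, Hq.
    rewrite Z.ltb_lt in Hp, Hq. exists p, q. tauto.
  - intros [H|[p [q [Hp [Hq [Hpt [Hqt ->]]]]]]]; [left; exact H|right].
    exists p. rewrite filter_In, Z.ltb_lt. split; [tauto|].
    apply in_map. rewrite filter_In, Z.ltb_lt. tauto.
Qed.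

Lemma fm_step_coef_zero t t' rows : (forall r, In r rows -> row_coef r t' = 0%Z) ->
  forall r, In r (fm_step t rows) -> row_coef r t' = 0%Z.
Proof.
  intros H r Hr. apply in_fm_step in Hr as [[Hr _]|[p [q [Hp [Hq [Hpt [Hqt ->]]]]]]]; auto.
  rewrite row_coef_combine, (H p), (H q) by auto. ring.
Qed.

Lemma fm_step_eliminates t rows r : In r (fm_step t rows) -> row_coef r t = 0%Z.
Proof.
  intros Hr. apply in_fm_step in Hr as [[_ Hr]|[p [q [_ [_ [Hpt [Hqt ->]]]]]]]; auto.
  rewrite row_coef_combine by auto. ring.
Qed.

Lemma fm_eliminate_coef_zero_preserved ts t rows : (forall r, In r rows -> row_coef r t = 0%Z) ->
  forall r, In r (fm_eliminate ts rows) -> row_coef r t = 0%Z.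
Proof.
  revert rows. induction ts as [|t' ts IH]; intros rows H; simpl; auto.
  apply IH, fm_step_coef_zero, H.
Qed.

Lemma fm_eliminate_coef_zero ts rows t : In t ts ->
  forall r, In r (fm_eliminate ts rows) -> row_coef r t = 0%Z.
Proof.
  revert rows. induction ts as [|t' ts IH]; intros rows Ht; [destruct Ht|simpl].
  destruct Ht as [<-|Ht]; [|apply IH; exact Ht].
  apply fm_eliminate_coef_zero_preserved, fm_step_eliminates.
Qed.

Hypothesis vars_nodup : NoDup vars.

Lemma lin_update k y t s : In t vars -> lin k (update y t s) = lin k y + IZR (a k t) * (s - y t).
Proof.
  unfold lin. generalize vars_nodup. generalize vars as l. intros l Hnd Hin.
  induction Hnd as [|t' l Hn Hnd IH]; [destruct Hin|]. simpl. unfold update at 1.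
  destruct (T_eq_dec t' t) as [->|Hne].
  - enough (E : forall l', ~ In t l' ->
      fold_right (fun t' acc => IZR (a k t') * update y t s t' + acc) 0 l'
      = fold_right (fun t' acc => IZR (a k t') * y t' + acc) 0 l') by (rewrite E; auto; ring).
    clear. induction l' as [|t' l' IH]; intros Hn; simpl; [reflexivity|].
    rewrite IH by (intro; apply Hn; simpl; auto). unfold update.
    destruct (T_eq_dec t' t); [subst; exfalso; apply Hn; simpl; auto|reflexivity].
  - destruct Hin as [->|Hin]; [congruence|]. rewrite IH by auto. ring.
Qed.

Lemma row_val_update rho y t s : In t vars ->
  row_val rho (update y t s) = row_val rho y + IZR (row_coef rho t) * (s - y t).
Proof.
  intros Hin. induction rho as [|[c k] rho IH]; simpl; [ring|].
  rewrite IH, lin_update by auto. rewrite plus_IZR, mult_IZR, <- INR_IZR_INZ. ring.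
Qed.

Lemma fm_step_sound t rows y : In t vars ->
  (forall r, In r (fm_step t rows) -> row_val r y >= 0) ->
  exists s, forall r, In r rows -> row_val r (update y t s) >= 0.
Proof.
  intros Hin H.
  set (lower_bd := fun p => - row_val p y / IZR (row_coef p t)).
  set (upper_bd := fun q => row_val q y / IZR (- row_coef q t)).
  set (pos := filter (fun r => Z.ltb 0 (row_coef r t)) rows).
  set (neg := filter (fun r => Z.ltb (row_coef r t) 0) rows).
  destruct (separating_point (map lower_bd pos) (map upper_bd neg)) as [d [Hl Hu]].
  - intros l u Hl Hu.
    apply in_map_iff in Hl as [p [<- Hp]]. apply in_map_iff in Hu as [q [<- Hq]].
    apply filter_In in Hp as [Hp Hpt]. apply filter_In in Hq as [Hq Hqt].
    apply Z.ltb_lt in Hpt. apply Z.ltb_lt in Hqt.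
    assert (Hc : In (row_combine t p q) (fm_step t rows))
      by (apply in_fm_step; right; exists p, q; auto).
    specialize (H _ Hc). rewrite row_val_combine in H by auto.
    apply div_le_div_comb; [apply IZR_lt; lia|apply IZR_lt; lia|lra].
  - exists (y t + d). intros r Hr. rewrite row_val_update by auto.
    replace (y t + d - y t) with d by ring.
    destruct (Z.lt_trichotomy (row_coef r t) 0) as [Hneg|[Hz|Hpos]].
    + assert (Hd : d <= upper_bd r).
      { apply Hu, in_map. apply filter_In. rewrite Z.ltb_lt. auto. }
      apply le_div_sub in Hd; [|apply IZR_lt; lia]. rewrite opp_IZR in Hd. lra.
    + rewrite Hz. specialize (H r (proj2 (in_fm_step t rows r) (or_introl (conj Hr Hz)))). lra.
    + assert (Hd : lower_bd r <= d).
      { apply Hl, in_map. apply filter_In. rewrite Z.ltb_lt. auto. }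
      apply div_le_add in Hd; [lra|apply IZR_lt; lia].
Qed.

Lemma fm_eliminate_sound ts : incl ts vars -> forall rows y,
  (forall r, In r (fm_eliminate ts rows) -> row_val r y >= 0) ->
  exists y', forall r, In r rows -> row_val r y' >= 0.
Proof.
  induction ts as [|t ts IH]; intros Hinc rows y H; simpl in H; [exists y; auto|].
  destruct (IH (proj2 (incl_cons_inv Hinc)) _ _ H) as [y' Hy'].
  destruct (fm_step_sound t rows y' (proj1 (incl_cons_inv Hinc)) Hy') as [s Hs]. eauto.
Qed.

End FourierMotzkin.

Fixpoint lform_pforms {Phi0 : Type} (f : lform Phi0) : list (pform Phi0) :=
  match f with
  | LGe t _ => map snd (term_list t)
  | LNot g => lform_pforms g
  | LAnd g h => lform_pforms g ++ lform_pforms h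
  end.

(* Replace the formulas [lform_pforms f], read left to right, by the variables
   [x_n, x_(n+1), ...]. *)
Fixpoint abstract_terms {Phi0 : Type} (l : list (R * pform Phi0)) (n : nat) : list (R * nat) :=
  match l with
  | [] => []
  | p :: l' => (fst p, n) :: abstract_terms l' (S n)
  end.

Fixpoint abstract {Phi0 : Type} (f : lform Phi0) (n : nat) : iform :=
  match f with
  | LGe (h, tl) c => IGe (fst h, n) (abstract_terms tl (S n)) c
  | LNot g => INot (abstract g n)
  | LAnd g h => IAnd (abstract g n) (abstract h (n + length (lform_pforms g)))
  end.

Section Abstraction.
Variables (Phi0 : Type) (d : pform Phi0).

Lemma iinst_abstract_terms (sigma : nat -> pform Phi0) tl : forall n,
  (forall k, (k < length tl)%nat -> sigma (n + k)%nat = nth k (map snd tl) d) ->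
  map (fun p => (fst p, sigma (snd p))) (abstract_terms tl n) = tl.
Proof.
  induction tl as [|[a phi] tl IH]; intros n H; simpl; [reflexivity|]. f_equal.
  - specialize (H 0%nat). rewrite Nat.add_0_r in H. simpl in H. rewrite H by lia. reflexivity.
  - apply IH. intros k Hk. specialize (H (S k)). simpl in H. rewrite <- H by lia. f_equal. lia.
Qed.

Lemma iinst_abstract (sigma : nat -> pform Phi0) (f : lform Phi0) : forall n,
  (forall k, (k < length (lform_pforms f))%nat -> sigma (n + k)%nat = nth k (lform_pforms f) d) ->
  iinst sigma (abstract f n) = f.
Proof.
  induction f as [[[a phi] tl] c|g IH|g IHg h IHh]; intros n H; simpl in *.
  - do 3 f_equal.
    + specialize (H 0%nat). rewrite Nat.add_0_r in H. apply H. lia.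
    + apply iinst_abstract_terms. intros k Hk. specialize (H (S k)).
      replace (S n + k)%nat with (n + S k)%nat by lia. apply H. rewrite length_map. simpl. lia.
  - f_equal. apply IH. auto.
  - f_equal.
    + apply IHg. intros k Hk. rewrite H by (rewrite length_app; lia). rewrite app_nth1; auto.
    + apply IHh. intros k Hk. rewrite <- Nat.add_assoc, H by (rewrite length_app; lia).
      rewrite app_nth2 by lia. f_equal. lia.
Qed.

Variable M : UPS Phi0.

Lemma lin_sum_abstract_terms (x : nat -> R) tl : forall n,
  (forall k, (k < length tl)%nat -> x (n + k)%nat = lik M (nth k (map snd tl) d)) ->
  lin_sum x (abstract_terms tl n) = lin_val M tl.
Proof.
  induction tl as [|[a phi] tl IH]; intros n H; simpl; [reflexivity|].
  rewrite (IH (S n)).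
  - specialize (H 0%nat). rewrite Nat.add_0_r in H. simpl in H. rewrite H by lia. reflexivity.
  - intros k Hk. specialize (H (S k)). simpl in H. rewrite <- H by lia. f_equal. lia.
Qed.

Lemma ieval_abstract (x : nat -> R) (f : lform Phi0) : forall n,
  (forall k, (k < length (lform_pforms f))%nat ->
             x (n + k)%nat = lik M (nth k (lform_pforms f) d)) ->
  (ieval x (abstract f n) <-> sat M f).
Proof.
  induction f as [[[a phi] tl] c|g IH|g IHg h IHh]; intros n H; cbn [abstract ieval sat fst].
  - rewrite term_val_cons. simpl in H. cbn [lin_sum fold_right fst snd].
    fold (lin_sum x (abstract_terms tl (S n))). rewrite (lin_sum_abstract_terms x tl (S n)).
    + specialize (H 0%nat). rewrite Nat.add_0_r in H. simpl in H. rewrite H by lia. reflexivity.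
    + intros k Hk. replace (S n + k)%nat with (n + S k)%nat by lia.
      apply H. rewrite length_map. simpl. lia.
  - rewrite IH; auto. reflexivity.
  - simpl in H. rewrite IHg, IHh; [reflexivity| |].
    + intros k Hk. rewrite <- Nat.add_assoc, H by (rewrite length_app; lia).
      rewrite app_nth2 by lia. do 2 f_equal. lia.
    + intros k Hk. rewrite H by (rewrite length_app; lia). rewrite app_nth1; auto.
Qed.

End Abstraction.

Fixpoint bitvecs (n : nat) : list (list bool) :=
  match n with
  | O => [[]]
  | S n' => map (cons false) (bitvecs n') ++ map (cons true) (bitvecs n')
  end.

Lemma in_bitvecs n w : length w = n -> In w (bitvecs n).
Proof.
  revert w. induction n as [|n IH]; intros [|b w] Hw; simpl in *; try discriminate; auto.
  apply in_or_app. destruct b; [right|left]; apply in_map, IH; lia.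
Qed.

Lemma bitvecs_nodup n : NoDup (bitvecs n).
Proof.
  induction n as [|n IH]; simpl; [repeat constructor; intros []|].
  apply NoDup_app; try (apply Injective_map_NoDup; auto; intros u v E; injection E; auto).
  intros w H1 H2. apply in_map_iff in H1 as [u [<- _]]. apply in_map_iff in H2 as [v [E _]].
  discriminate.
Qed.

Definition bvec_eq_dec := list_eq_dec Bool.bool_dec.

Definition bit (j : nat) (w : list bool) : bool := nth j w false.

Lemma sum_ext_in {A : Type} (l : list A) (F G : A -> R) : (forall a, In a l -> F a = G a) ->
  fold_right (fun a acc => F a + acc) 0 l = fold_right (fun a acc => G a + acc) 0 l.
Proof.
  induction l as [|a l IH]; intros H; simpl; [reflexivity|].
  rewrite H, IH; simpl; auto. intros; apply H; simpl; auto.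
Qed.

Lemma sum_nonneg {A : Type} (l : list A) (F : A -> R) : (forall a, In a l -> 0 <= F a) ->
  0 <= fold_right (fun a acc => F a + acc) 0 l.
Proof.
  induction l as [|a l IH]; intros H; simpl; [lra|].
  pose proof (H a (or_introl eq_refl)). pose proof (IH (fun b Hb => H b (or_intror Hb))). lra.
Qed.

Lemma sum_add {A : Type} (l : list A) (F G : A -> R) :
  fold_right (fun a acc => (F a + G a) + acc) 0 l
  = fold_right (fun a acc => F a + acc) 0 l + fold_right (fun a acc => G a + acc) 0 l.
Proof. induction l as [|a l IH]; simpl; [ring|]. rewrite IH. ring. Qed.

(* Constraints on a weighting [m] of truth patterns [w]: the mass of [fs_j] is at most [x_j]
   ([CMass j]), the mass of [fs_i] is at least [x_i] ([CAttain]), the total mass is [1], and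
   [m w >= 0]. *)
Inductive constr : Type :=
| CMass (j : nat)
| CAttain
| CTotalGe
| CTotalLe
| CNonneg (w : list bool).

Definition constr_coef (i : nat) (k : constr) (w : list bool) : Z :=
  match k with
  | CMass j => (- Z.b2z (bit j w))%Z
  | CAttain => Z.b2z (bit i w)
  | CTotalGe => 1%Z
  | CTotalLe => (-1)%Z
  | CNonneg w' => if bvec_eq_dec w w' then 1%Z else 0%Z
  end.

Definition constr_const (x : nat -> R) (i : nat) (k : constr) : R :=
  match k with
  | CMass j => x j
  | CAttain => - x i
  | CTotalGe => -1
  | CTotalLe => 1
  | CNonneg _ => 0
  end.

(* A row of the eliminated system is read as an instance of L4: the [CMass j] give the
   [phi_j]'s, [CAttain] gives [n], [CTotalGe] gives [k], and [CTotalLe] contributes copies of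
   [fs_0 = true]. *)
Definition row_indices (rho : list (nat * constr)) : list nat :=
  flat_map (fun ck => match snd ck with
                      | CMass j => repeat j (fst ck)
                      | CTotalLe => repeat 0%nat (fst ck)
                      | _ => []
                      end) rho.

Definition row_n (rho : list (nat * constr)) : nat :=
  fold_right (fun ck acc => ((match snd ck with CAttain => fst ck | _ => 0 end) + acc)%nat)
             0%nat rho.

Definition row_k (rho : list (nat * constr)) : nat :=
  fold_right (fun ck acc => ((match snd ck with CTotalGe => fst ck | _ => 0 end) + acc)%nat)
             0%nat rho.

Definition sum_at (x : nat -> R) (l : list nat) : R := fold_right (fun j acc => x j + acc) 0 l.

Lemma sum_at_app x l1 l2 : sum_at x (l1 ++ l2) = sum_at x l1 + sum_at x l2.
Proof. induction l1; simpl; [ring|]. rewrite IHl1. ring. Qed.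

Lemma sum_at_repeat x j c : sum_at x (repeat j c) = INR c * x j.
Proof. induction c as [|c IH]; simpl sum_at; [simpl; ring|]. rewrite IH, S_INR. ring. Qed.

Lemma row_const_sum x i rho : x 0%nat = 1 ->
  fold_right (fun ck acc => INR (fst ck) * constr_const x i (snd ck) + acc) 0 rho
  = sum_at x (row_indices rho) - INR (row_n rho) * x i - INR (row_k rho).
Proof.
  intros H0. induction rho as [|[c k] rho IH]; simpl; [ring|].
  unfold row_indices, row_n, row_k in *. simpl. rewrite sum_at_app, IH.
  destruct k; simpl; rewrite ?sum_at_repeat, ?plus_INR; simpl; rewrite ?H0; ring.
Qed.

Definition L4_iform (l : list nat) (n i k : nat) : iform :=
  match l with
  | [] => IGe (- INR n, i) [] (INR k)
  | j :: l' => IGe (1, j) (map (fun j => (1, j)) l' ++ [(- INR n, i)]) (INR k)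
  end.

Lemma iinst_L4_iform {Phi0 : Type} (sigma : nat -> pform Phi0) l n i k :
  iinst sigma (L4_iform l n i k) = LGe (L4_term (map sigma l) n (sigma i)) (INR k).
Proof.
  destruct l as [|j l]; simpl; [reflexivity|]. unfold L4_term. simpl.
  rewrite map_app, !map_map. reflexivity.
Qed.

Lemma ieval_L4_iform x l n i k : ieval x (L4_iform l n i k) <-> sum_at x l - INR n * x i >= INR k.
Proof.
  assert (E : forall l', lin_sum x (map (fun j => (1, j)) l') = sum_at x l').
  { induction l' as [|j l' IH]; simpl; [reflexivity|]. rewrite <- IH. unfold lin_sum. simpl. ring. }
  assert (A : forall l1 l2, lin_sum x (l1 ++ l2) = lin_sum x l1 + lin_sum x l2).
  { induction l1 as [|p l1 IH]; intros; unfold lin_sum in *; simpl; [ring|]. rewrite IH. ring. }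
  destruct l as [|j l]; simpl; unfold lin_sum; simpl.
  - replace (- INR n * x i + 0) with (0 - INR n * x i) by ring. reflexivity.
  - fold (lin_sum x (map (fun j => (1, j)) l ++ [(- INR n, i)])). rewrite A, E.
    unfold lin_sum. simpl. replace (1 * x j + (sum_at x l + (- INR n * x i + 0)))
      with (x j + sum_at x l - INR n * x i) by ring. reflexivity.
Qed.

Section Atoms.
Variables (Phi0 : Type) (fs : list (pform Phi0)).

Definition realizable (w : list bool) : Prop := exists v, map (peval v) fs = w.

(* the truth patterns of [fs] under some valuation, i.e. the atoms of the algebra they generate *)
Definition atoms : list (list bool) :=
  filter (fun w => if excluded_middle_informative (realizable w) then true else false)
         (bitvecs (length fs)).

Lemma in_atoms w : In w atoms <-> realizable w.
Proof.
  unfold atoms. rewrite filter_In.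
  destruct (excluded_middle_informative (realizable w)) as [Hr|Hr]; [|intuition discriminate].
  split; [tauto|]. intros _. split; [|reflexivity]. apply in_bitvecs.
  destruct Hr as [v <-]. apply length_map.
Qed.

Lemma atoms_nodup : NoDup atoms.
Proof. apply NoDup_filter, bitvecs_nodup. Qed.

Lemma bit_map_peval v j : bit j (map (peval v) fs) = peval v (nth j fs (PFalse Phi0)).
Proof.
  unfold bit. revert j. induction fs as [|q l IH]; intros [|j]; simpl; auto.
Qed.

Definition constrs : list constr :=
  map CMass (seq 0 (length fs)) ++ [CAttain; CTotalGe; CTotalLe] ++ map CNonneg atoms.

Definition final_rows (i : nat) : list (list (nat * constr)) :=
  fm_eliminate (constr_coef i) atoms (map (fun k => [(1%nat, k)]) constrs).

Lemma row_count_bound i v (rho : list (nat * constr)) : nth 0 fs (PFalse Phi0) = PTrue Phi0 ->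
  let w := map (peval v) fs in
  (Z.of_nat (count_true v (map (fun j => nth j fs (PFalse Phi0)) (row_indices rho)))
     + row_coef (constr_coef i) rho w
   >= Z.of_nat (row_k rho) + Z.b2z (bit i w) * Z.of_nat (row_n rho))%Z.
Proof.
  intros H0 w. induction rho as [|[c k] rho IH]; [simpl; lia|].
  unfold row_indices, row_k, row_n in *. cbn [flat_map fold_right fst snd].
  rewrite map_app, count_true_app, row_coef_cons.
  assert (0 <= Z.b2z (bit i w) <= 1)%Z by (destruct (bit i w); simpl; lia).
  destruct k as [j| | | |w']; cbn [constr_coef]; simpl app; simpl map.
  - rewrite map_repeat, count_true_repeat.
    replace (bit j w) with (peval v (nth j fs (PFalse Phi0))) by (symmetry; apply bit_map_peval).
    destruct (peval v (nth j fs (PFalse Phi0))); cbn [Z.b2z]; lia.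
  - simpl count_true. nia.
  - simpl count_true. lia.
  - rewrite map_repeat, count_true_repeat, H0. simpl. lia.
  - simpl count_true. destruct (bvec_eq_dec w w'); lia.
Qed.

Lemma final_row_count i v rho : nth 0 fs (PFalse Phi0) = PTrue Phi0 -> In rho (final_rows i) ->
  (count_true v (map (fun j => nth j fs (PFalse Phi0)) (row_indices rho))
   >= row_k rho + (if peval v (nth i fs (PFalse Phi0)) then row_n rho else 0))%nat.
Proof.
  intros H0 Hrho. pose proof (row_count_bound i v rho H0) as C. simpl in C.
  assert (Hw : In (map (peval v) fs) atoms) by (apply in_atoms; exists v; reflexivity).
  rewrite (fm_eliminate_coef_zero _ _ _ _ Hw _ Hrho), bit_map_peval in C.
  destruct (peval v (nth i fs (PFalse Phi0))); cbn [Z.b2z] in *; lia.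
Qed.
Definition mass (j : nat) (m : list bool -> R) : R :=
  fold_right (fun w acc => IZR (Z.b2z (bit j w)) * m w + acc) 0 atoms.

Definition total (m : list bool -> R) : R := fold_right (fun w acc => m w + acc) 0 atoms.

Section Constraints.
Variables (i : nat) (m : list bool -> R).

Lemma lin_CMass j : lin (constr_coef i) atoms (CMass j) m = - mass j m.
Proof.
  unfold lin, mass. generalize atoms as l. induction l as [|w l IH]; simpl in *; [ring|].
  rewrite IH, opp_IZR. ring.
Qed.

Lemma lin_CAttain : lin (constr_coef i) atoms CAttain m = mass i m.
Proof. reflexivity. Qed.

Lemma lin_CTotalGe : lin (constr_coef i) atoms CTotalGe m = total m.
Proof.
  unfold lin, total. generalize atoms as l. induction l; simpl in *; [ring|]. rewrite IHl. ring.
Qed.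

Lemma lin_CTotalLe : lin (constr_coef i) atoms CTotalLe m = - total m.
Proof.
  unfold lin, total. generalize atoms as l. induction l; simpl in *; [ring|]. rewrite IHl. ring.
Qed.

Lemma lin_CNonneg w : In w atoms -> lin (constr_coef i) atoms (CNonneg w) m = m w.
Proof.
  unfold lin. generalize atoms_nodup. generalize atoms as l. intros l Hnd Hw.
  induction Hnd as [|w' l Hn Hnd IH]; [destruct Hw|]. cbn [fold_right constr_coef] in *.
  destruct (bvec_eq_dec w' w) as [->|Hne].
  - enough (E : fold_right (fun t acc => IZR (if bvec_eq_dec t w then 1%Z else 0%Z) * m t + acc)
                           0 l = 0) by (rewrite E; ring).
    clear - Hn. induction l as [|t l IH]; simpl; [reflexivity|].
    rewrite IH by (intro; apply Hn; simpl; auto).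
    destruct (bvec_eq_dec t w); [subst; exfalso; apply Hn; simpl; auto|ring].
  - destruct Hw as [->|Hw]; [congruence|]. rewrite IH by auto. ring.
Qed.

End Constraints.

Definition realizer (w : list bool) : Phi0 -> bool :=
  epsilon (inhabits (fun _ => true)) (fun v => map (peval v) fs = w).

Lemma realizer_spec w : realizable w -> map (peval (realizer w)) fs = w.
Proof. exact (epsilon_spec _ (fun v => map (peval v) fs = w)). Qed.

Definition induced_prob (m : list bool -> R) (X : (Phi0 -> bool) -> Prop) : R :=
  fold_right (fun w acc =>
                m w * (if excluded_middle_informative (X (realizer w)) then 1 else 0) + acc)
             0 atoms.

Definition dominated (x : nat -> R) (m : list bool -> R) : Prop :=
  (forall w, In w atoms -> 0 <= m w) /\ total m = 1 /\
  (forall j, (j < length fs)%nat -> mass j m <= x j).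

Lemma induced_prob_fa x m : dominated x m -> is_fa_prob (fun _ => True) (induced_prob m).
Proof.
  intros [Hpos [Htot _]]. unfold induced_prob. split; [|split].
  - intros X _. apply sum_nonneg. intros w Hw.
    destruct (excluded_middle_informative _); pose proof (Hpos w Hw); lra.
  - transitivity (total m); [|exact Htot]. apply sum_ext_in. intros w _.
    destruct (excluded_middle_informative True); [ring|tauto].
  - intros X Y _ _ Hd. rewrite <- sum_add. apply sum_ext_in. intros w _.
    set (v := realizer w).
    destruct (excluded_middle_informative (X v \/ Y v));
    destruct (excluded_middle_informative (X v));
    destruct (excluded_middle_informative (Y v)); try ring; exfalso; eauto; tauto.
Qed.

Lemma induced_prob_atom m j :
  induced_prob m (fun v => peval v (nth j fs (PFalse Phi0)) = true) = mass j m.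
Proof.
  unfold induced_prob, mass. apply sum_ext_in. intros w Hw.
  rewrite <- bit_map_peval, realizer_spec by (apply in_atoms; auto).
  destruct (excluded_middle_informative (bit j w = true)) as [->|Hb]; simpl; [ring|].
  destruct (bit j w); [tauto|]. simpl. ring.
Qed.

Lemma algebra_full (T : Type) : is_algebra (fun _ : T -> Prop => True).
Proof. repeat split. Qed.

Definition dominated_probs (x : nat -> R) (mu : ((Phi0 -> bool) -> Prop) -> R) : Prop :=
  exists m, dominated x m /\ mu = induced_prob m.

Lemma dominated_probs_fa x mu : dominated_probs x mu -> is_fa_prob (fun _ => True) mu.
Proof. intros [m [Hm ->]]. eapply induced_prob_fa; eauto. Qed.

Lemma dominated_probs_nonempty x : (exists m, dominated x m) -> exists mu, dominated_probs x mu.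
Proof. intros [m Hm]. exists (induced_prob m), m. auto. Qed.

Definition canonical_ups (x : nat -> R) (Hx : exists m, dominated x m) : UPS Phi0 :=
  {| ups_Omega := Phi0 -> bool;
     ups_Sigma := fun _ => True;
     ups_Sigma_alg := algebra_full (Phi0 -> bool);
     ups_P := dominated_probs x;
     ups_P_prob := @dominated_probs_fa x;
     ups_P_nonempty := dominated_probs_nonempty Hx;
     ups_pi := fun v => v;
     ups_pi_meas := fun _ => I |}.

Lemma lik_canonical_ups x (Hx : exists m, dominated x m) j :
  (exists m, dominated x m /\ x j <= mass j m) -> (j < length fs)%nat ->
  lik (canonical_ups Hx) (nth j fs (PFalse Phi0)) = x j.
Proof.
  intros [mj [Hmj Hattain]] Hj.
  destruct (upper_spec _ (ext_measurable (canonical_ups Hx) (nth j fs (PFalse Phi0))))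
    as [Hub Hlub].
  unfold lik. apply Rle_antisym.
  - apply Hlub. intros mu [m [Hm ->]]. unfold ext. simpl. rewrite induced_prob_atom.
    apply Hm; auto.
  - eapply Rle_trans; [|apply (Hub (induced_prob mj)); exists mj; auto].
    unfold ext. simpl. rewrite induced_prob_atom. auto.
Qed.

Lemma exists_dominated_attaining x i : x 0%nat = 1 ->
  (forall rho, In rho (final_rows i) ->
     ieval x (L4_iform (row_indices rho) (row_n rho) i (row_k rho))) ->
  exists m, dominated x m /\ x i <= mass i m.
Proof.
  intros H0 Hrows.
  destruct (fm_eliminate_sound bvec_eq_dec (constr_coef i) (constr_const x i) atoms_nodup
              (incl_refl atoms) (map (fun k => [(1%nat, k)]) constrs) (fun _ => 0)) as [m Hm].
  { intros rho Hrho. rewrite row_val_zero, row_const_sum by auto.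
    specialize (Hrows rho Hrho). apply ieval_L4_iform in Hrows. lra. }
  assert (Hk : forall k, In k constrs -> lin (constr_coef i) atoms k m + constr_const x i k >= 0).
  { intros k Hk. specialize (Hm [(1%nat, k)] (in_map _ _ _ Hk)). simpl in Hm. lra. }
  assert (HCNonneg : forall w, In w atoms -> In (CNonneg w) constrs).
  { intros w Hw. apply in_app_iff. right. apply in_app_iff. right. apply in_map, Hw. }
  assert (Hmid : forall k, In k [CAttain; CTotalGe; CTotalLe] -> In k constrs).
  { intros k Hk'. apply in_app_iff. right. apply in_app_iff. left. exact Hk'. }
  exists m. repeat split.
  - intros w Hw. specialize (Hk _ (HCNonneg w Hw)). rewrite lin_CNonneg in Hk by auto.
    simpl in Hk. lra.
  - pose proof (Hk CTotalGe (Hmid CTotalGe ltac:(simpl; tauto))) as Hge.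
    pose proof (Hk CTotalLe (Hmid CTotalLe ltac:(simpl; tauto))) as Hle.
    rewrite lin_CTotalGe in Hge. rewrite lin_CTotalLe in Hle. simpl in Hge, Hle. lra.
  - intros j Hj. assert (Hin : In (CMass j) constrs).
    { apply in_app_iff. left. apply in_map, in_seq. lia. }
    specialize (Hk _ Hin). rewrite lin_CMass in Hk. simpl in Hk. lra.
  - specialize (Hk CAttain (Hmid CAttain ltac:(simpl; tauto))). rewrite lin_CAttain in Hk.
    simpl in Hk. lra.
Qed.

End Atoms.

Lemma provable_and {Phi0 : Type} (f g : lform Phi0) :
  provable f -> provable g -> provable (LAnd f g).
Proof.
  intros Hf Hg.
  (* [p -> q -> p /\ q] *)
  set (s := SNot (SAnd (SVar 0) (SNot (SNot (SAnd (SVar 1) (SNot (SAnd (SVar 0) (SVar 1)))))))).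
  assert (Hs : staut s) by (intros v; simpl; destruct (v 0%nat), (v 1%nat); reflexivity).
  pose proof (Ax_Taut (fun n => match n with O => f | _ => g end) Hs) as Htaut.
  change (provable (LImp f (LImp g (LAnd f g)))) in Htaut.
  apply (@Rule_MP _ g); auto. apply (@Rule_MP _ f); auto.
Qed.

Lemma provable_fold_IAnd {Phi0 : Type} (sigma : nat -> pform Phi0) base l :
  provable (iinst sigma base) -> (forall e, In e l -> provable (iinst sigma e)) ->
  provable (iinst sigma (fold_right IAnd base l)).
Proof.
  induction l as [|e l IH]; intros Hb Hl; simpl; auto.
  apply provable_and; [apply Hl; simpl; auto|]. apply IH; auto. intros; apply Hl; simpl; auto.
Qed.

Lemma ieval_fold_IAnd x base l :
  ieval x (fold_right IAnd base l) -> ieval x base /\ forall e, In e l -> ieval x e.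
Proof.
  induction l as [|e l IH]; simpl; intros H; [split; [auto|intros _ []]|].
  destruct H as [H1 [H2 H3]%IH]. split; auto. intros e' [<-|He]; auto.
Qed.

Definition L4_instances {Phi0 : Type} (fs : list (pform Phi0)) : list iform :=
  flat_map (fun i => map (fun rho => L4_iform (row_indices rho) (row_n rho) i (row_k rho))
                         (final_rows fs i))
           (seq 0 (length fs)).

Lemma in_L4_instances {Phi0 : Type} (fs : list (pform Phi0)) e : In e (L4_instances fs) <->
  exists i rho, (i < length fs)%nat /\ In rho (final_rows fs i) /\
                e = L4_iform (row_indices rho) (row_n rho) i (row_k rho).
Proof.
  unfold L4_instances. rewrite in_flat_map. split.
  - intros [i [Hi He]]. apply in_map_iff in He as [rho [<- Hrho]]. apply in_seq in Hi.
    exists i, rho. repeat split; auto; lia.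
  - intros [i [rho [Hi [Hrho ->]]]]. exists i. split; [apply in_seq; lia|].
    apply in_map_iff. eauto.
Qed.

Lemma provable_L4_instance {Phi0 : Type} (fs : list (pform Phi0)) e :
  nth 0 fs (PFalse Phi0) = PTrue Phi0 -> In e (L4_instances fs) ->
  provable (iinst (fun j => nth j fs (PFalse Phi0)) e).
Proof.
  intros H0 He. apply in_L4_instances in He as [i [rho [_ [Hrho ->]]]].
  rewrite iinst_L4_iform.
  pose proof (fun v => final_row_count fs i v rho H0 Hrho) as Hcount.
  eapply Ax_L4; [reflexivity| |]; intros v; specialize (Hcount v).
  - simpl. destruct (peval v (nth i fs (PFalse Phi0))); simpl; [|reflexivity].
    rewrite (proj2 (peval_at_least _ _ _)); [reflexivity|lia].
  - apply peval_at_least. destruct (peval v _); lia.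
Qed.

Definition L2_iform : iform := IAnd (IGe (1, 0%nat) [] 1) (IGe (Ropp 1, 0%nat) [] (Ropp 1)).

(* With [x_0] standing for [l(true)] and [x_(k+1)] for [l] of the [k]-th formula of [f]: the
   instances of L2 and L4 over these formulas imply [f]. *)
Definition completeness_iform {Phi0 : Type} (f : lform Phi0) : iform :=
  INot (IAnd (fold_right IAnd L2_iform (L4_instances (PTrue Phi0 :: lform_pforms f)))
             (INot (abstract f 1))).

Lemma ivalid_completeness_iform {Phi0 : Type} (f : lform Phi0) :
  (forall M : UPS Phi0, sat M f) -> ivalid (completeness_iform f).
Proof.
  intros Hf x. set (fs := PTrue Phi0 :: lform_pforms f). simpl. intros [Hhyps Hnot]. apply Hnot.
  apply ieval_fold_IAnd in Hhyps as [HL2 HL4].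
  assert (H0 : x 0%nat = 1) by (cbn in HL2; lra).
  assert (Hattain : forall i, (i < length fs)%nat ->
                              exists m, dominated fs x m /\ x i <= mass fs i m).
  { intros i Hi. apply exists_dominated_attaining; auto. intros rho Hrho.
    apply HL4, in_L4_instances. exists i, rho. auto. }
  assert (Hx : exists m, dominated fs x m).
  { destruct (Hattain 0%nat) as [m [Hm _]]; [simpl; lia|]. eauto. }
  apply (ieval_abstract (PFalse Phi0) (canonical_ups Hx) x f 1); [|apply Hf].
  intros k Hk. symmetry.
  change (nth k (lform_pforms f) (PFalse Phi0)) with (nth (S k) fs (PFalse Phi0)).
  apply lik_canonical_ups; [apply Hattain|]; simpl; lia.
Qed.

Theorem theorem4 (Phi0 : Type) (f : lform Phi0) :
  provable f <-> (forall M : UPS Phi0, sat M f).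
Proof.
  split; [intros Hf M; apply soundness, Hf|intros Hf].
  set (fs := PTrue Phi0 :: lform_pforms f).
  set (sigma := fun j => nth j fs (PFalse Phi0)).
  pose proof (Ax_Ineq sigma (ivalid_completeness_iform f Hf)) as Hineq.
  change (provable (LImp (iinst sigma (fold_right IAnd L2_iform (L4_instances fs)))
                         (iinst sigma (abstract f 1)))) in Hineq.
  rewrite (iinst_abstract (PFalse Phi0) sigma f 1) in Hineq by reflexivity.
  refine (Rule_MP _ Hineq). apply provable_fold_IAnd; [apply Ax_L2|].
  intros e He. apply provable_L4_instance; [reflexivity|exact He].
Qed.
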